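(* Let $n\ge 3$ and consider the Majority Model (MM) on the cycle $C_n$ with a coloring $\mathcal{C}$ in which there exist two adjacent nodes with the same color. Then, starting from $\mathcal{C}$, the process reaches a stable coloring after exactly $\lceil l/2\rceil$ rounds, where $l$ is the length of the longest alternating path in the path partition of $\mathcal{C}$.
   Context: A coloring of a graph is a map from its nodes to $\{b,w\}$ (blue/white). In the Majority Model (MM), all nodes update simultaneously in each round: a node adopts the color strictly more frequent among its neighbors in the previous round, and keeps its current color in case of a tie. A coloring is stable if one application of the update rule returns the same coloring. On a cycle, a path is monochromatic if all its nodes have the same color, and alternating if every two adjacent nodes on it have opposite colors; the length of a path is its number of nodes. Path partition: let $B$ (resp. $W$) be the set of nodes lying on maximal blue (resp. white) paths of length at least two in $\mathcal{C}$; the nodes not in $B\cup W$ are partitioned into maximal alternating paths (lying between such monochromatic paths). The path partition consists of these maximal monochromatic paths of length at least two and these maximal alternating paths (take $l=0$ if there are no alternating paths). *)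

From mathcomp Require Import all_boot.
Set Implicit Arguments. Unset Strict Implicit. Unset Printing Implicit Defensive.

(* Colors: true = blue (b), false = white (w). A coloring is a map T -> bool. *)

Definition mm_step (T : finType) (adj : rel T) (c : T -> bool) : T -> bool :=
  fun x =>
    let nb := #|[pred y | adj x y && c y]| in
    let nw := #|[pred y | adj x y && ~~ c y]| in
    if nw < nb then true else if nb < nw then false else c x.

Definition stable (T : finType) (adj : rel T) (c : T -> bool) : Prop :=
  forall x, mm_step adj c x = c x.

Definition stabilizes_after (T : finType) (adj : rel T) (c : T -> bool)
    (k : nat) : Prop :=
  stable adj (iter k (mm_step adj) c) /\
  forall j, j < k -> ~ stable adj (iter j (mm_step adj) c).

Definition cycle_adj (n : nat) : rel 'I_n :=
  fun u v => (v == ordS u) || (u == ordS v).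

(* u lies on a maximal monochromatic path of length >= 2 (u is in B or W)
   iff u has a neighbour of the same color. *)
Definition in_mono (n : nat) (c : 'I_n -> bool) (u : 'I_n) : bool :=
  [exists v, cycle_adj u v && (c u == c v)].

(* Length of the longest alternating path of the path partition:
   the largest k such that k consecutive nodes i, i+1, ..., i+k-1 (mod n)
   all lie outside B ∪ W (0 if there is none). *)
Definition longest_alt (n : nat) (c : 'I_n -> bool) : nat :=
  \max_(k < n.+1 | [exists i : 'I_n, forall j : 'I_n,
                      (j < k) ==> ~~ in_mono c (iter j (@ordS n) i)]) k.

From mathcomp Require Import all_boot zify.
Set Implicit Arguments. Unset Strict Implicit. Unset Printing Implicit Defensive.

(* On a cycle every node has exactly two neighbours, so the majority rule
   says: a node with a neighbour of its own colour keeps its colour, and a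
   node whose two neighbours both have the opposite colour flips.  Hence,
   after one round, a node has a same-coloured neighbour iff it or one of
   its two neighbours had one before: the set B ∪ W grows by one node at
   each end of every alternating path, and each alternating path loses two
   nodes per round.  Since B ∪ W is nonempty, no alternating path wraps
   around the cycle, so the longest one has length l - 2m after m rounds,
   and the coloring is stable exactly when no alternating node remains,
   i.e. after ⌈l/2⌉ rounds. *)

Lemma val_iter_ordS n (i : 'I_n) j : val (iter j (@ordS n) i) = (i + j) %% n.
Proof.
elim: j => [|j IHj] /=; first by rewrite addn0 modn_small.
by rewrite IHj /= -addn1 modnDml -addnA addn1 addnS.
Qed.

Lemma iter_ordS_surj n (i u : 'I_n) : exists2 j, j < n & iter j (@ordS n) i = u.
Proof.
have n_gt0 : 0 < n by case: n i u => [[]|].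
exists ((u + n - i) %% n); first by rewrite ltn_mod.
apply: val_inj; rewrite /= val_iter_ordS modnDmr.
have -> : i + (u + n - i) = u + n by have := ltn_ord i; lia.
by rewrite modnDr modn_small.
Qed.

Lemma cycle_adjE n (u v : 'I_n) :
  cycle_adj u v = (v == ordS u) || (v == ord_pred u).
Proof.
rewrite /cycle_adj; congr (_ || _).
by apply/eqP/eqP => ->; rewrite ?ordSK ?ord_predK.
Qed.

Lemma ordS_neq_ord_pred n (u : 'I_n) : 2 < n -> ordS u != ord_pred u.
Proof.
move=> n_gt2; apply/eqP => eq_Su_Pu.
have /(congr1 val) : iter 2 (@ordS n) u = u by rewrite /= eq_Su_Pu ord_predK.
rewrite val_iter_ordS => eq_u2_u.
have : (u + 2) %% n == (u + 0) %% n by rewrite eq_u2_u addn0 modn_small.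
by rewrite eqn_modDl mod0n modn_small.
Qed.

Lemma in_monoE n (c : 'I_n -> bool) u :
  in_mono c u = (c (ordS u) == c u) || (c (ord_pred u) == c u).
Proof.
apply/existsP/orP => [[v /andP[]]|].
- by rewrite cycle_adjE => /orP[] /eqP-> /eqP->; [left | right].
- case=> [/eqP cSu | /eqP cPu]; [exists (ordS u) | exists (ord_pred u)];
    by rewrite cycle_adjE ?cSu ?cPu !eqxx ?orbT.
Qed.

Section MajorityOnCycle.

Variables (n : nat) (n_gt2 : 2 < n).

Local Notation step := (mm_step (@cycle_adj n)).

Lemma card_cycle_adj (u : 'I_n) (P : pred 'I_n) :
  #|[pred y | cycle_adj u y && P y]| = P (ordS u) + P (ord_pred u).
Proof.
rewrite (cardD1 (ordS u)) (cardD1 (ord_pred u)) eq_card0.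
  by rewrite !inE !cycle_adjE !eqxx /= orbT eq_sym (negPf (ordS_neq_ord_pred u n_gt2)) addn0.
move=> y; rewrite !inE cycle_adjE.
by case: (y == ord_pred u); case: (y == ordS u); rewrite ?andbF.
Qed.

Lemma mm_step_cycleE (c : 'I_n -> bool) u :
  step c u = if in_mono c u then c u else ~~ c u.
Proof.
rewrite /mm_step !card_cycle_adj in_monoE /=.
by case: (c u); case: (c (ordS u)); case: (c (ord_pred u)).
Qed.

Lemma in_mono_mm_step (c : 'I_n -> bool) u :
  in_mono (step c) u =
  [|| in_mono c (ord_pred u), in_mono c u | in_mono c (ordS u)].
Proof.
rewrite !in_monoE !mm_step_cycleE !in_monoE ?ordSK ?ord_predK.
by case: (c u); case: (c (ordS u)); case: (c (ord_pred u));
   case: (c (ordS (ordS u))); case: (c (ord_pred (ord_pred u))).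
Qed.

Lemma stable_cycleP (c : 'I_n -> bool) :
  stable (@cycle_adj n) c <-> forall u, in_mono c u.
Proof.
split=> [stable_c u | mono_c u]; last by rewrite mm_step_cycleE mono_c.
by have := stable_c u; rewrite mm_step_cycleE; case: (in_mono c u); case: (c u).
Qed.

Lemma has_mono_mm_step (c : 'I_n -> bool) :
  (exists u, in_mono c u) -> exists u, in_mono (step c) u.
Proof. by case=> u mono_u; exists u; rewrite in_mono_mm_step mono_u orbT. Qed.

End MajorityOnCycle.

Definition alt_run n (c : 'I_n -> bool) (i : 'I_n) (k : nat) : Prop :=
  forall j, j < k -> ~~ in_mono c (iter j (@ordS n) i).

Section LongestAlternatingPath.

Variables (n : nat) (c : 'I_n -> bool).

Lemma longest_alt_le : longest_alt c <= n.
Proof. by apply/bigmax_leqP => k _; rewrite -ltnS. Qed.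

Lemma alt_run_le_longest_alt i k : k <= n -> alt_run c i k -> k <= longest_alt c.
Proof.
move=> k_le_n run_ik; apply: (@bigmax_sup _ (Ordinal (k_le_n : k < n.+1))) => //=.
by apply/existsP; exists i; apply/forallP => j; apply/implyP; apply: run_ik.
Qed.

Lemma longest_alt_run : 0 < n -> exists i, alt_run c i (longest_alt c).
Proof.
move=> n_gt0.
pose A := [pred k : 'I_n.+1 | [exists i : 'I_n, forall j : 'I_n,
                      (j < k) ==> ~~ in_mono c (iter j (@ordS n) i)]].
have A_gt0 : 0 < #|A|.
  apply/card_gt0P; exists ord0; rewrite inE.
  by apply/existsP; exists (Ordinal n_gt0); apply/forallP.
have [k] := @eq_bigmax_cond _ A id A_gt0; rewrite inE => /existsP[i /forallP run_ik].
rewrite /longest_alt => ->; exists i => j lt_jk.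
have lt_jn : j < n by apply: leq_trans lt_jk _; rewrite -ltnS.
exact: implyP (run_ik (Ordinal lt_jn)) lt_jk.
Qed.

Lemma alt_run_lt (u : 'I_n) i k : in_mono c u -> alt_run c i k -> k < n.
Proof.
move=> + run_ik; rewrite ltnNge; apply: contraL => le_nk.
have [j lt_jn <-] := iter_ordS_surj i u.
exact: run_ik j (leq_trans lt_jn le_nk).
Qed.

Lemma longest_alt_eq0 : 0 < n -> longest_alt c = 0 <-> forall u, in_mono c u.
Proof.
move=> n_gt0; split=> [L0 u | mono_c].
- apply: contraT => not_mono_u.
  have : 1 <= longest_alt c.
    apply: (@alt_run_le_longest_alt u) => // j; rewrite ltnS leqn0 => /eqP-> /=.
    exact: not_mono_u.
  by rewrite L0.
- have [i] := longest_alt_run n_gt0.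
  by case: (longest_alt c) => // L /(_ 0 isT); rewrite mono_c.
Qed.

End LongestAlternatingPath.

Section AlternatingPathsShrink.

Variables (n : nat) (n_gt2 : 2 < n) (c : 'I_n -> bool).

Local Notation step := (mm_step (@cycle_adj n)).

Lemma alt_run_mm_step i k :
  alt_run (step c) (ordS i) k.+1 <-> alt_run c i k.+3.
Proof.
have window j : ~~ in_mono (step c) (iter j (@ordS n) (ordS i)) =
    [&& ~~ in_mono c (iter j (@ordS n) i), ~~ in_mono c (iter j.+1 (@ordS n) i)
      & ~~ in_mono c (iter j.+2 (@ordS n) i)].
  by rewrite -iterSr in_mono_mm_step // -iterS (iterS j) ordSK -!negb_or.
split=> [run_step m lt_m | run_c j lt_j]; last first.
  by rewrite window; apply/and3P; split; apply: run_c; lia.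
case: m lt_m => [|[|m]] lt_m.
- by have := run_step 0 isT; rewrite window => /and3P[].
- by have := run_step 0 isT; rewrite window => /and3P[].
- have lt_mk : m < k.+1 by lia.
  by have := run_step m lt_mk; rewrite window => /and3P[].
Qed.

Lemma longest_alt_mm_step :
  (exists u, in_mono c u) -> longest_alt (step c) = longest_alt c - 2.
Proof.
move=> [u mono_u]; have n_gt0 : 0 < n by apply: ltn_trans n_gt2.
apply/eqP; rewrite eqn_leq; apply/andP; split.
- have [i] := longest_alt_run (step c) n_gt0.
  rewrite -[i]ord_predK.
  case: (longest_alt (step c)) => // k /alt_run_mm_step run_c.
  have := alt_run_le_longest_alt (ltnW (alt_run_lt mono_u run_c)) run_c; lia.
- have [i] := longest_alt_run c n_gt0.
  have := longest_alt_le c.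
  case: (longest_alt c) => [|[|[|k]]] // le_kn run_c.
  apply: (@alt_run_le_longest_alt _ _ (ordS i)); first lia.
  exact/alt_run_mm_step.
Qed.

End AlternatingPathsShrink.

Lemma longest_alt_iter_mm_step n (c : 'I_n -> bool) m : 2 < n ->
  (exists u, in_mono c u) ->
  longest_alt (iter m (mm_step (@cycle_adj n)) c) = longest_alt c - m.*2.
Proof.
move=> n_gt2 has_mono.
have has_mono_iter k : exists u, in_mono (iter k (mm_step (@cycle_adj n)) c) u.
  by elim: k => [|k IHk] //; apply: has_mono_mm_step.
elim: m => [|m IHm]; first by rewrite subn0.
by rewrite iterS longest_alt_mm_step // IHm doubleS; lia.
Qed.

Theorem lemma2p2 (n : nat) (hn : 3 <= n) (c : 'I_n -> bool)
  (hmono : exists u v : 'I_n, cycle_adj u v /\ c u = c v) :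
  stabilizes_after (@cycle_adj n) c (uphalf (longest_alt c)).
Proof.
have has_mono : exists u, in_mono c u.
  case: hmono => u [v [adj_uv cu_cv]].
  by exists u; apply/existsP; exists v; rewrite adj_uv cu_cv eqxx.
have n_gt0 : 0 < n by apply: leq_trans hn.
have stable_iterE m : stable (@cycle_adj n) (iter m (mm_step (@cycle_adj n)) c)
    <-> longest_alt c <= m.*2.
  by rewrite stable_cycleP // -longest_alt_eq0 // longest_alt_iter_mm_step // -subn_eq0;
    split=> /eqP.
split=> [|j]; first by rewrite stable_iterE -leq_uphalf_double.
by rewrite stable_iterE gtn_uphalf_double ltnNge => /negP.
Qed.
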